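(* Let $d\geq 1$, let $p_1<\dots<p_d$ be the first $d$ prime numbers, let $N\geq 1$ be an integer, let $C>1$ and $\varepsilon\in\mathbb{R}$. Let $\mathbf{A}_1$ be the $(d+1)\times(d+1)$ matrix whose $i$-th column ($1\le i\le d$) has entry $\ln p_i$ in row $i$, entry $C\ln p_i$ in row $d+1$ and zeros elsewhere, and whose last column is $(0,\dots,0,C\ln N)^T$. Let $\mathbf{z}\in\mathbb{Z}^{d+1}$ with $z_{d+1}<0$, put $\gamma=|z_{d+1}|\geq 1$, $$u=\prod_{1\le i\le d,\ z_i>0}p_i^{z_i},\qquad k=\prod_{1\le i\le d,\ z_i<0}p_i^{-z_i},$$ and suppose $\|\mathbf{A}_1\mathbf{z}\|_1\leq\varepsilon$. Then $$|u-kN^\gamma|\leq\frac{N^{\gamma/2}}{C}\exp\left(\frac{\varepsilon}{2}\right).$$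
   Context: $\ln$ is the natural logarithm, $\|\cdot\|_1$ the $\ell^1$ norm; empty products equal $1$. *)

From HB Require Import structures.
From mathcomp Require Import all_boot all_order all_algebra.
From mathcomp Require Import all_classical all_reals all_analysis.
Set Implicit Arguments. Unset Strict Implicit. Unset Printing Implicit Defensive.
Import Order.TTheory GRing.Theory Num.Theory.
Local Open Scope ring_scope.

(* p 0 < p 1 < ... < p (d-1) are the first d prime numbers (0-indexed:
   the paper's p_i is p (i-1)). *)
Definition first_primes (d : nat) (p : nat -> nat) : Prop :=
  [/\ (forall i, (i < d)%N -> prime (p i)),
      (forall i j, (i < j)%N -> (j < d)%N -> (p i < p j)%N) &
      (forall q, prime q -> (q <= p d.-1)%N -> exists2 i, (i < d)%N & p i = q)].

(* The (d+1)x(d+1) matrix A_1 (indices 0..d; index d is the paper's d+1). *)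
Definition A1 {R : realType} (d : nat) (p : nat -> nat) (C : R) (N : nat)
  : 'M[R]_(d.+1) :=
  \matrix_(i < d.+1, j < d.+1)
    if (j < d)%N then
      (if i == j then ln ((p j)%:R : R)
       else if i == ord_max then C * ln ((p j)%:R : R) else 0)
    else (if i == ord_max then C * ln (N%:R : R) else 0).

Definition norm1 {R : realType} (n : nat) (v : 'cV[R]_n) : R :=
  \sum_(i < n) `|v i 0|.

Definition u_of (d : nat) (p : nat -> nat) (z : 'cV[int]_(d.+1)) : nat :=
  (\prod_(i < d | (0 < z (widen_ord (leqnSn d) i) ord0)%R)
     p i ^ `|z (widen_ord (leqnSn d) i) ord0|%N)%N.
Definition k_of (d : nat) (p : nat -> nat) (z : 'cV[int]_(d.+1)) : nat :=
  (\prod_(i < d | (z (widen_ord (leqnSn d) i) ord0 < 0)%R)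
     p i ^ `|z (widen_ord (leqnSn d) i) ord0|%N)%N.

From HB Require Import structures.
From mathcomp Require Import all_boot all_order all_algebra.
From mathcomp Require Import all_classical all_reals all_analysis.
From mathcomp Require Import ring lra.
Import Order.TTheory GRing.Theory Num.Theory.
Local Open Scope ring_scope.

(* Put u = e^U and k N^gamma = e^P, where U and K are the logarithmic sizes of
   the positive and negative parts of z and P = K + gamma ln N.  Then
   ||A_1 z||_1 = U + K + C |U - P|, so it suffices to show
   C |e^U - e^P| <= exp ((U + P) / 2 + C |U - P| / 2).  With s = |U - P| / 2
   this is the one-variable inequality C (e^(2s) - 1) <= e^((C+1)s), which
   follows from convexity of exp and concavity of ln. *)

Section ExpInequalities.
Context {R : realType}.
Implicit Types a b s t x y C : R.

Lemma ln_le_subr1 x : 0 < x -> ln x <= x - 1.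
Proof. by move=> x0; rewrite -{1}(subrKC 1 x) le_ln1Dx //; lra. Qed.

Lemma expR_convex t x y : 0 <= t <= 1 ->
  expR (t * x + (1 - t) * y) <= t * expR x + (1 - t) * expR y.
Proof.
case/andP=> t0 t1; have t1' : 0 <= 1 - t by rewrite subr_ge0.
set z := t * x + (1 - t) * y.
have tangent w : expR z * (1 + (w - z)) <= expR w.
  have -> : expR w = expR z * expR (w - z) by rewrite -expRD subrKC.
  by rewrite ler_pM2l ?expR_gt0 // expR_ge1Dx.
have := lerD (ler_wpM2l t0 (tangent x)) (ler_wpM2l t1' (tangent y)).
congr (_ <= _); rewrite /z; ring.
Qed.

Lemma ln_convex_comb_le0 t a b : 0 <= t <= 1 -> 0 < a -> 0 < b ->
  t * a + (1 - t) * b = 1 -> t * ln a + (1 - t) * ln b <= 0.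
Proof.
case/andP=> t0 t1 a0 b0 ab1; have t1' : 0 <= 1 - t by rewrite subr_ge0.
apply: le_trans (lerD (ler_wpM2l t0 (ln_le_subr1 _ a0)) (ler_wpM2l t1' (ln_le_subr1 _ b0))) _.
have -> : t * (a - 1) + (1 - t) * (b - 1) = t * a + (1 - t) * b - 1 by ring.
by rewrite ab1 subrr.
Qed.

(* Convexity of [expR] with weights t = 2/(C+1), 1 - t at (C+1)s - ln(C t) and
   - ln(1 - t); since t (C t) + (1 - t)^2 = 1, Jensen for [ln] shows that the
   constants only help. *)
Lemma expR_double_sub1_le C s : 1 < C -> C * (expR (2 * s) - 1) <= expR ((C + 1) * s).
Proof.
move=> C1; set t := 2 / (C + 1).
have t0 : 0 < t by rewrite divr_gt0 //; lra.
have t1 : 0 < 1 - t by rewrite subr_gt0 ltr_pdivrMr; lra.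
have t01 : 0 <= t <= 1 by apply/andP; split; lra.
have Ct0 : 0 < C * t by rewrite mulr_gt0 //; lra.
have weights : t * (C * t) + (1 - t) * (1 - t) = 1 by rewrite /t; field; lra.
have convexity := expR_convex t ((C + 1) * s - ln (C * t)) (- ln (1 - t)) t01.
rewrite expRN expRB !lnK ?posrE // in convexity.
have bound : expR (2 * s) <= expR ((C + 1) * s) / C + 1.
  have -> : expR ((C + 1) * s) / C + 1
            = t * (expR ((C + 1) * s) / (C * t)) + (1 - t) / (1 - t).
    by field; rewrite !lt0r_neq0 //; lra.
  apply: le_trans convexity; rewrite ler_expR.
  have -> : t * ((C + 1) * s - ln (C * t)) + (1 - t) * - ln (1 - t)
            = 2 * s - (t * ln (C * t) + (1 - t) * ln (1 - t)) by rewrite /t; field; lra.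
  have := ln_convex_comb_le0 _ _ _ t01 Ct0 t1 weights; lra.
by rewrite -ler_pdivlMl; lra.
Qed.

Lemma normr_expRB_le C x y : 1 < C ->
  C * `|expR x - expR y| <= expR ((x + y) / 2 + C * `|x - y| / 2).
Proof.
move=> C1; wlog yx : x y / y <= x.
  move=> H; case: (leP y x) => [/H//|/ltW/H].
  by rewrite (distrC (expR y)) (distrC y) (addrC y).
have s_ge0 : 0 <= (x - y) / 2 by rewrite divr_ge0 // subr_ge0.
have -> : expR x - expR y = expR y * (expR (2 * ((x - y) / 2)) - 1).
  by rewrite mulrBr mulr1 -expRD; congr (expR _ - _); field.
have -> : (x + y) / 2 + C * `|x - y| / 2 = y + (C + 1) * ((x - y) / 2).
  by rewrite ger0_norm; [field | lra].
rewrite normrM gtr0_norm ?expR_gt0 // expRD mulrCA ler_pM2l ?expR_gt0 //.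
rewrite ger0_norm; first exact: expR_double_sub1_le.
by rewrite subr_ge0 leNgt expR_lt1 -leNgt mulr_ge0.
Qed.
End ExpInequalities.

Section LogCoordinates.
Context {R : realType} {d : nat}.
Variables (p : nat -> nat) (C : R) (N : nat).
Variable z : 'cV[int]_(d.+1).
Hypothesis p_gt0 : forall i, (i < d)%N -> (0 < p i)%N.

Local Notation zi i := (z (widen_ord (leqnSn d) i) ord0).
Local Notation lnp i := (ln ((p i)%:R : R)).

Definition log_u : R := \sum_(i < d | 0 < zi i) (`|zi i|%N)%:R * lnp i.
Definition log_k : R := \sum_(i < d | zi i < 0) (`|zi i|%N)%:R * lnp i.

Lemma u_ofE : (u_of p z)%:R = expR log_u.
Proof.
rewrite /u_of natr_prod expR_sum; apply: eq_bigr => i _.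
by rewrite natrX expRM_natl lnK // posrE ltr0n p_gt0.
Qed.

Lemma k_ofE : (k_of p z)%:R = expR log_k.
Proof.
rewrite /k_of natr_prod expR_sum; apply: eq_bigr => i _.
by rewrite natrX expRM_natl lnK // posrE ltr0n p_gt0.
Qed.

Lemma sum_log_coords : \sum_(i < d) lnp i * (zi i)%:~R = log_u - log_k.
Proof.
rewrite /log_u /log_k [\sum_(i < d | 0 < zi i) _]big_mkcond.
rewrite [\sum_(i < d | zi i < 0) _]big_mkcond -sumrB; apply: eq_bigr => i _ /=.
rewrite natr_absz intr_norm.
by case: (ltrgtP (zi i) 0) => [zneg|zpos|->];
  [rewrite ltr0_norm ?ltrz0 // | rewrite gtr0_norm ?ltr0z // | ]; ring.
Qed.

Lemma sum_norm_log_coords : \sum_(i < d) `|lnp i * (zi i)%:~R| = log_u + log_k.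
Proof.
rewrite /log_u /log_k [\sum_(i < d | 0 < zi i) _]big_mkcond.
rewrite [\sum_(i < d | zi i < 0) _]big_mkcond -big_split; apply: eq_bigr => i _ /=.
have lnp_ge0 : 0 <= lnp i by rewrite ln_ge0 // ler1n p_gt0.
rewrite normrM (ger0_norm lnp_ge0) natr_absz intr_norm.
by case: (ltrgtP (zi i) 0) => [zneg|zpos|->];
  [rewrite ltr0_norm ?ltrz0 // | rewrite gtr0_norm ?ltr0z // | rewrite normr0]; ring.
Qed.

Local Notation A1z := (A1 d p C N *m map_mx (fun x : int => (x%:~R : R)) z).

Lemma widen_ord_neq_max (i : 'I_d) : (widen_ord (leqnSn d) i == ord_max) = false.
Proof. by apply/negbTE; rewrite -val_eqE /= neq_ltn ltn_ord. Qed.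

Lemma A1_mulmx_widen (i : 'I_d) :
  A1z (widen_ord (leqnSn d) i) ord0 = lnp i * (zi i)%:~R.
Proof.
rewrite mxE big_ord_recr /= !mxE /= ltnn widen_ord_neq_max mul0r addr0.
rewrite (bigD1 i) //= big1 ?addr0 => [|j ji]; rewrite !mxE /= ltn_ord.
  by rewrite eqxx.
by rewrite -val_eqE /= val_eqE eq_sym (negbTE ji) widen_ord_neq_max mul0r.
Qed.

Lemma A1_mulmx_max : A1z ord_max ord0 =
  C * (\sum_(i < d) lnp i * (zi i)%:~R + ln (N%:R : R) * (z ord_max ord0)%:~R).
Proof.
rewrite mxE big_ord_recr /= !mxE /= ltnn eqxx mulrDr mulrA mulr_sumr.
congr (_ + _); apply: eq_bigr => j _.
by rewrite !mxE /= ltn_ord eq_sym widen_ord_neq_max eqxx mulrA.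
Qed.

Lemma norm1_A1_mulmx : 0 < C -> norm1 A1z =
  log_u + log_k + C * `|log_u - log_k + ln (N%:R : R) * (z ord_max ord0)%:~R|.
Proof.
move=> C_gt0; rewrite /norm1 big_ord_recr /= A1_mulmx_max sum_log_coords.
rewrite normrM (gtr0_norm C_gt0) -sum_norm_log_coords; congr (_ + _).
by apply: eq_bigr => i _; rewrite A1_mulmx_widen.
Qed.

End LogCoordinates.

Theorem lemma1 (R : realType) (d : nat) (p : nat -> nat) (N : nat) (C eps : R)
  (z : 'cV[int]_(d.+1)) :
  (1 <= d)%N -> first_primes d p -> (1 <= N)%N -> 1 < C ->
  z ord_max ord0 < 0 ->
  norm1 (A1 d p C N *m map_mx (fun x : int => (x%:~R : R)) z) <= eps ->
  let gamma := `|z ord_max ord0|%N in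
  `| ((u_of p z)%:R : R) - (k_of p z)%:R * (N%:R : R) ^+ gamma |
    <= (N%:R : R) `^ (gamma%:R / 2) / C * expR (eps / 2).
Proof.
move=> _ [p_prime _ _] N_ge1 C_gt1 zd_lt0 A1z_le /=; set gamma := `|_|%N.
have p_gt0 i : (i < d)%N -> (0 < p i)%N by move/p_prime/prime_gt0.
have N_gt0 : 0 < (N%:R : R) by rewrite ltr0n.
have C_gt0 : 0 < C by apply: lt_trans C_gt1.
have zdE : ((z ord_max ord0)%:~R : R) = - gamma%:R.
  by rewrite natr_absz intr_norm ltr0_norm ?ltrz0 // opprK.
set P := log_k p z + gamma%:R * ln (N%:R : R).
have kNE : (k_of p z)%:R * (N%:R : R) ^+ gamma = expR P.
  by rewrite k_ofE // expRD expRM_natl lnK.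
have sqrtNE : (N%:R : R) `^ (gamma%:R / 2) = expR (gamma%:R * ln (N%:R : R) / 2).
  by rewrite /powR gt_eqF // mulrAC.
rewrite u_ofE // kNE sqrtNE mulrAC ler_pdivlMr // mulrC -expRD.
apply: le_trans (normr_expRB_le _ _ _ C_gt1) _; rewrite ler_expR.
move: A1z_le; rewrite norm1_A1_mulmx // zdE.
have -> : log_u p z - log_k p z + ln N%:R * - gamma%:R = log_u p z - P by rewrite /P; ring.
set dev := C * `|_|; rewrite /P; lra.
Qed.
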